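(* Let $\mathfrak{b}_6$ be a butterfly algebra. Then there is a vector space decomposition $\mathfrak{b}_6=\mathfrak{v}\oplus[\mathfrak{b}_6,\mathfrak{b}_6]$ in which the subspaces $\mathfrak{v}$ and $[\mathfrak{b}_6,\mathfrak{b}_6]$ are totally isotropic and dual to each other with respect to $(\cdot,\cdot)$. In particular, $(\cdot,\cdot)$ is non-degenerate of signature $(3,3)$.
   Context: A butterfly algebra is a real 2-step nilpotent Lie algebra $\mathfrak{b}_6$ (i.e. $[\mathfrak{b}_6,[\mathfrak{b}_6,\mathfrak{b}_6]]=0$) of dimension $6$, endowed with a symmetric bilinear form $(\cdot,\cdot)$ that is invariant, i.e. $([X,Y],Z)=-(Y,[X,Z])$ for all $X,Y,Z$, such that there exists $Z\in[\mathfrak{b}_6,\mathfrak{b}_6]$ not lying in the radical $\mathfrak{r}=\{X\in\mathfrak{b}_6\mid (X,\mathfrak{b}_6)=0\}$. *)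

From HB Require Import structures.
From mathcomp Require Import all_boot all_order all_algebra.
From mathcomp Require Import reals.
Set Implicit Arguments. Unset Strict Implicit. Unset Printing Implicit Defensive.
Import Order.TTheory GRing.Theory Num.Theory.
Local Open Scope ring_scope.

Notation V6 R := 'rV[R]_6.

Definition is_lie_bracket (R : realType) (br : V6 R -> V6 R -> V6 R) : Prop :=
  [/\ (forall (a : R) x y z, br (a *: x + y) z = a *: br x z + br y z),
      (forall (a : R) x y z, br x (a *: y + z) = a *: br x y + br x z),
      (forall x, br x x = 0) &
      (forall x y z, br x (br y z) + br y (br z x) + br z (br x y) = 0)].

Definition two_step_nilpotent (R : realType) (br : V6 R -> V6 R -> V6 R) : Prop :=
  forall x y z, br x (br y z) = 0.

Definition in_derived (R : realType) (br : V6 R -> V6 R -> V6 R) (z : V6 R) : Prop :=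
  exists (n : nat) (xs ys : 'I_n -> V6 R), z = \sum_(i < n) br (xs i) (ys i).

Definition bform (R : realType) (B : 'M[R]_6) (x y : V6 R) : R :=
  (x *m B *m y^T) 0 0.

Definition invariant_form (R : realType) (br : V6 R -> V6 R -> V6 R) (B : 'M[R]_6)
  : Prop := forall x y z, bform B (br x y) z = - bform B y (br x z).

Definition in_radical (R : realType) (B : 'M[R]_6) (x : V6 R) : Prop :=
  forall y, bform B x y = 0.

Definition butterfly (R : realType) (br : V6 R -> V6 R -> V6 R) (B : 'M[R]_6) : Prop :=
  [/\ is_lie_bracket br, two_step_nilpotent br, B^T = B, invariant_form br B &
      exists z, in_derived br z /\ ~ in_radical B z].

Definition signature (R : realType) (B : 'M[R]_6) (p q : nat) : Prop :=
  (p + q = 6)%N /\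
  exists P : 'M[R]_6, P \in unitmx /\
    P *m B *m P^T = diag_mx (\row_(i < 6) if (i < p)%N then 1 else -1).

(* The form ([x,y],z) of a butterfly algebra is an alternating trilinear form, and the
   derived algebra is totally isotropic since ([x,y],[u,w]) = -(y,[x,[u,w]]) = 0.  As
   some bracket lies outside the radical, lam := ([a,b],c) <> 0 for some a, b, c.  The
   rows e = ([b,c],[c,a],[a,b]) pair with x = (a,b,c) through lam I, and subtracting
   S e / (2 lam), with S the Gram matrix of x, makes x isotropic without changing that
   pairing.  The resulting triples f and e are isotropic and in hyperbolic position, so
   (f, e) is a basis of the algebra, e spans the derived algebra, and the rows of
   f +- e / (2 lam) bring the form to diag(1,1,1,-1,-1,-1). *)

From HB Require Import structures.
From mathcomp Require Import all_boot all_order all_algebra.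
From mathcomp Require Import reals ring.
From Stdlib Require Import Classical.
Set Implicit Arguments. Unset Strict Implicit. Unset Printing Implicit Defensive.
Import Order.TTheory GRing.Theory Num.Theory.
Local Open Scope ring_scope.

Section Gram.
Variables (R : comPzRingType) (n : nat) (B : 'M[R]_n).

Definition gram m p (A : 'M[R]_(m, n)) (C : 'M[R]_(p, n)) : 'M[R]_(m, p) :=
  A *m B *m C^T.

Lemma gramDl m p (A1 A2 : 'M_(m, n)) (C : 'M_(p, n)) :
  gram (A1 + A2) C = gram A1 C + gram A2 C.
Proof. by rewrite /gram !mulmxDl. Qed.

Lemma gramDr m p (A : 'M_(m, n)) (C1 C2 : 'M_(p, n)) :
  gram A (C1 + C2) = gram A C1 + gram A C2.
Proof. by rewrite /gram linearD mulmxDr. Qed.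

Lemma gramBl m p (A1 A2 : 'M_(m, n)) (C : 'M_(p, n)) :
  gram (A1 - A2) C = gram A1 C - gram A2 C.
Proof. by rewrite /gram !mulmxBl. Qed.

Lemma gramBr m p (A : 'M_(m, n)) (C1 C2 : 'M_(p, n)) :
  gram A (C1 - C2) = gram A C1 - gram A C2.
Proof. by rewrite /gram linearB mulmxBr. Qed.

Lemma gramNl m p (A : 'M_(m, n)) (C : 'M_(p, n)) : gram (- A) C = - gram A C.
Proof. by rewrite /gram !mulNmx. Qed.

Lemma gramNr m p (A : 'M_(m, n)) (C : 'M_(p, n)) : gram A (- C) = - gram A C.
Proof. by rewrite /gram linearN mulmxN. Qed.

Lemma gramZl m p a (A : 'M_(m, n)) (C : 'M_(p, n)) :
  gram (a *: A) C = a *: gram A C.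
Proof. by rewrite /gram -!scalemxAl. Qed.

Lemma gramZr m p a (A : 'M_(m, n)) (C : 'M_(p, n)) :
  gram A (a *: C) = a *: gram A C.
Proof. by rewrite /gram linearZ scalemxAr. Qed.

Lemma gramMl m k p (K : 'M_(k, m)) (A : 'M_(m, n)) (C : 'M_(p, n)) :
  gram (K *m A) C = K *m gram A C.
Proof. by rewrite /gram !mulmxA. Qed.

Lemma gramMr m k p (K : 'M_(k, p)) (A : 'M_(m, n)) (C : 'M_(p, n)) :
  gram A (K *m C) = gram A C *m K^T.
Proof. by rewrite /gram trmx_mul !mulmxA. Qed.

Lemma gram_col_mx m1 m2 p1 p2 (A1 : 'M_(m1, n)) (A2 : 'M_(m2, n))
    (C1 : 'M_(p1, n)) (C2 : 'M_(p2, n)) :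
  gram (col_mx A1 A2) (col_mx C1 C2) =
  block_mx (gram A1 C1) (gram A1 C2) (gram A2 C1) (gram A2 C2).
Proof. by rewrite /gram tr_col_mx mul_col_mx mul_col_row. Qed.

Hypothesis symB : B^T = B.

Lemma tr_gram m p (A : 'M_(m, n)) (C : 'M_(p, n)) : (gram A C)^T = gram C A.
Proof. by rewrite /gram !trmx_mul trmxK symB mulmxA. Qed.

End Gram.

Section IsotropicLift.
Variables (R : numFieldType) (n k : nat) (B : 'M[R]_n).
Hypothesis symB : B^T = B.
Variables (X E : 'M[R]_(k, n)) (lam : R).
Hypotheses (lam_neq0 : lam != 0) (gramXE : gram B X E = lam%:M)
  (gramEE : gram B E E = 0).

Definition isotropic_lift : 'M[R]_(k, n) :=
  X - (lam *+ 2)^-1 *: (gram B X X *m E).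

Lemma gram_isotropic_lift_l : gram B isotropic_lift E = lam%:M.
Proof. by rewrite gramBl gramZl gramMl gramEE mulmx0 scaler0 subr0. Qed.

Lemma gram_isotropic_lift : gram B isotropic_lift isotropic_lift = 0.
Proof.
have gramEX : gram B E X = lam%:M by rewrite -tr_gram // gramXE tr_scalar_mx.
rewrite !(gramBl, gramBr, gramZl, gramZr, gramMl, gramMr) gramXE gramEX gramEE.
rewrite tr_gram // mul_scalar_mx mul_mx_scalar mul0mx scaler0 mulmx0 scaler0 subr0.
by apply/matrixP => i j; rewrite !mxE; field.
Qed.

End IsotropicLift.

Lemma sign_block_mx (R : pzRingType) n :
  block_mx 1%:M 0 0 (- 1%:M) =
  diag_mx (\row_(i < n + n) if (i < n)%N then 1 else -1) :> 'M[R]_(n + n).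
Proof.
have -> : \row_(i < n + n) (if (i < n)%N then 1 else -1) =
          row_mx (const_mx 1) (const_mx (-1)) :> 'rV[R]_(n + n).
  by apply/rowP => i; rewrite !mxE; case: splitP => j _; rewrite mxE.
by rewrite diag_mx_row !diag_const_mx raddfN.
Qed.

Lemma mulmx_sign_block (R : pzRingType) n :
  block_mx 1%:M 0 0 (- 1%:M) *m block_mx 1%:M 0 0 (- 1%:M) = 1%:M :> 'M[R]_(n + n).
Proof.
rewrite mulmx_block !(mulmx0, mul0mx, mulmx1, addr0, add0r) mulmxN mulNmx mulmx1.
by rewrite opprK -scalar_mx_block.
Qed.

Section HyperbolicBasis.
Variables (R : numFieldType) (n : nat) (B : 'M[R]_(n + n)).
Hypothesis symB : B^T = B.
Variables (F E : 'M[R]_(n, n + n)) (lam : R).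
Hypotheses (lam_neq0 : lam != 0) (gramFF : gram B F F = 0)
  (gramEE : gram B E E = 0) (gramFE : gram B F E = lam%:M).

Definition hyperbolic_frame : 'M[R]_(n + n) :=
  col_mx (F + (lam *+ 2)^-1 *: E) (F - (lam *+ 2)^-1 *: E).

Lemma gram_hyperbolic_frame :
  gram B hyperbolic_frame hyperbolic_frame = block_mx 1%:M 0 0 (- 1%:M).
Proof.
have gramEF : gram B E F = lam%:M by rewrite -tr_gram // gramFE tr_scalar_mx.
rewrite gram_col_mx !(gramDl, gramDr, gramNl, gramNr, gramZl, gramZr).
rewrite gramFF gramEE gramFE gramEF !scaler0 !scale_scalar_mx.
by congr block_mx; apply/matrixP => i j; rewrite !mxE; case: eqP => _;
  rewrite ?mulr1n ?mulr0n; field.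
Qed.

Let unitmx_gram_frame : gram B hyperbolic_frame hyperbolic_frame \in unitmx.
Proof.
by rewrite gram_hyperbolic_frame; case: (mulmx1_unit (mulmx_sign_block R n)).
Qed.

Lemma unitmx_hyperbolic_frame : hyperbolic_frame \in unitmx.
Proof. by move: unitmx_gram_frame; rewrite !unitmx_mul => /andP[/andP[]]. Qed.

Lemma hyperbolic_form_unitmx : B \in unitmx.
Proof. by move: unitmx_gram_frame; rewrite !unitmx_mul => /andP[/andP[]]. Qed.

Lemma hyperbolic_span (x : 'rV[R]_(n + n)) :
  exists al be : 'rV[R]_n, x = al *m F + be *m E.
Proof.
pose y := x *m invmx hyperbolic_frame.
have -> : x = y *m hyperbolic_frame by rewrite mulmxKV // unitmx_hyperbolic_frame.
exists (lsubmx y + rsubmx y), ((lam *+ 2)^-1 *: (lsubmx y - rsubmx y)).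
rewrite -{1}[y]hsubmxK mul_row_col mulmxDr mulmxBr -!scalemxAr.
by rewrite mulmxDl -scalemxAl mulmxBl scalerBr addrACA.
Qed.

End HyperbolicBasis.

Section LieBracket.
Variables (R : realType) (br : V6 R -> V6 R -> V6 R).
Hypothesis lieB : is_lie_bracket br.

Lemma lie_addl x y z : br (x + y) z = br x z + br y z.
Proof. by case: lieB => linl _ _ _; have := linl 1 x y z; rewrite !scale1r. Qed.

Lemma lie_addr x y z : br x (y + z) = br x y + br x z.
Proof. by case: lieB => _ linr _ _; have := linr 1 x y z; rewrite !scale1r. Qed.

Lemma lie_self x : br x x = 0.
Proof. by case: lieB. Qed.

Lemma lie_scalel a x y : br (a *: x) y = a *: br x y.
Proof.
case: lieB => linl _ _ _; have br0 : br 0 y = 0.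
  by have := linl (-1) x x y; rewrite !scaleN1r !addNr.
by rewrite -[a *: x]addr0 linl br0 addr0.
Qed.

Lemma lie_antisym x y : br y x = - br x y.
Proof.
apply/eqP; rewrite -addr_eq0 addrC; apply/eqP.
by have := lie_self (x + y); rewrite lie_addl !lie_addr !lie_self add0r addr0.
Qed.

End LieBracket.

Section InvariantForm.
Variables (R : realType) (B : 'M[R]_6).

Lemma gram_entry m p (A : 'M[R]_(m, 6)) (C : 'M[R]_(p, 6)) i j :
  gram B A C i j = bform B (row i A) (row j C).
Proof.
rewrite /gram /bform !mxE; apply: eq_bigr => k _; rewrite !mxE; congr (_ * _).
by apply: eq_bigr => l _; rewrite !mxE.
Qed.

Lemma bformNl x y : bform B (- x) y = - bform B x y.
Proof. by rewrite /bform !mulNmx mxE. Qed.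

Lemma bform_suml n (xs : 'I_n -> V6 R) y :
  bform B (\sum_i xs i) y = \sum_i bform B (xs i) y.
Proof. by rewrite /bform !mulmx_suml summxE. Qed.

Lemma bform_sumr n (ys : 'I_n -> V6 R) x :
  bform B x (\sum_i ys i) = \sum_i bform B x (ys i).
Proof. by rewrite /bform linear_sum mulmx_sumr summxE. Qed.

Lemma in_radical_unitmx x : B \in unitmx -> in_radical B x -> x = 0.
Proof.
move=> unitB radx; have xB0 : gram B x 1%:M = 0.
  by apply/matrixP => i j; rewrite gram_entry row_id mxE; apply: radx.
rewrite /gram trmx1 mulmx1 in xB0.
by rewrite -[x]mulmx1 -(mulmxV unitB) mulmxA xB0 mul0mx.
Qed.

Hypothesis symB : B^T = B.

Lemma bformC x y : bform B x y = bform B y x.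
Proof. by rewrite -[LHS]/(gram B x y 0 0) -tr_gram // mxE. Qed.

Variable br : V6 R -> V6 R -> V6 R.
Hypotheses (lieB : is_lie_bracket br) (invB : invariant_form br B).

Lemma bform_lie_swap23 x y z : bform B (br x y) z = - bform B (br x z) y.
Proof. by rewrite invB bformC. Qed.

Lemma bform_lie_swap12 x y z : bform B (br y x) z = - bform B (br x y) z.
Proof. by rewrite lie_antisym // bformNl. Qed.

Lemma bform_lie_l x y : bform B (br x y) x = 0.
Proof. by rewrite bform_lie_swap23 lie_self // /bform !mul0mx mxE oppr0. Qed.

Lemma bform_lie_r x y : bform B (br x y) y = 0.
Proof.
by have /eqP := bform_lie_swap23 x y y; rewrite -addr_eq0 -mulr2n mulrn_eq0 => /eqP.
Qed.

Lemma bform_lie_cycle x y z : bform B (br y z) x = bform B (br x y) z.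
Proof. by rewrite bform_lie_swap23 bform_lie_swap12 opprK. Qed.

Hypothesis nilB : two_step_nilpotent br.

Lemma bform_lie_lie x y u w : bform B (br x y) (br u w) = 0.
Proof. by rewrite invB nilB /bform trmx0 mulmx0 mxE oppr0. Qed.

Lemma derived_isotropic z z' :
  in_derived br z -> in_derived br z' -> bform B z z' = 0.
Proof.
move=> [n [xs [ys ->]]] [n' [xs' [ys' ->]]].
rewrite bform_suml big1 // => i _; rewrite bform_sumr big1 // => j _.
exact: bform_lie_lie.
Qed.

End InvariantForm.

Definition rows3 (R : nmodType) n (a b c : 'rV[R]_n) : 'M[R]_(3, n) :=
  \matrix_(i < 3) [:: a; b; c]`_i.

Section Triple.
Variables (R : realType) (B : 'M[R]_6) (br : V6 R -> V6 R -> V6 R).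
Hypotheses (symB : B^T = B) (lieB : is_lie_bracket br) (invB : invariant_form br B)
  (nilB : two_step_nilpotent br).
Variables a b c : V6 R.

Definition brackets3 := rows3 (br b c) (br c a) (br a b).

Lemma gram_rows3_brackets3 :
  gram B (rows3 a b c) brackets3 = (bform B (br a b) c)%:M.
Proof.
apply/matrixP => i j; rewrite gram_entry !rowK !mxE bformC //.
case: i => [[|[|[|?]]] ?]; case: j => [[|[|[|?]]] ?] //=;
  rewrite ?mulr1n ?mulr0n ?bform_lie_l ?bform_lie_r //.
- by rewrite bform_lie_cycle.
- by rewrite -bform_lie_cycle.
Qed.

Lemma gram_brackets3 : gram B brackets3 brackets3 = 0.
Proof.
apply/matrixP => i j; rewrite gram_entry !rowK !mxE.
by case: i j => [[|[|[|?]]] ?] [[|[|[|?]]] ?]; rewrite //= bform_lie_lie.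
Qed.

Lemma in_derived_brackets3 (be : 'rV[R]_3) : in_derived br (be *m brackets3).
Proof.
exists 3, (fun i => be 0 i *: [:: b; c; a]`_i), (fun i => [:: c; a; b]`_i).
rewrite mulmx_sum_row; apply: eq_bigr => i _; rewrite lie_scalel // rowK.
by case: i => [[|[|[|?]]] ?].
Qed.

End Triple.

Lemma nonisotropic_triple (R : realType) (B : 'M[R]_6) (br : V6 R -> V6 R -> V6 R) :
  (exists z, in_derived br z /\ ~ in_radical B z) ->
  exists a b c, bform B (br a b) c != 0.
Proof.
move=> [_ [[n [xs [ys ->]]] /not_all_ex_not[y /eqP]]].
rewrite bform_suml; case: (pickP (fun i => bform B (br (xs i) (ys i)) y != 0)).
  by move=> i nz _; exists (xs i), (ys i), y.
by move=> all0; rewrite big1 ?eqxx // => i _; apply/eqP/negbFE/all0.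
Qed.

Definition isotropic_dual_complement (R : realType) (br : V6 R -> V6 R -> V6 R)
    (B : 'M[R]_6) (v : 'M[R]_6) : Prop :=
  (forall x : 'rV[R]_6, exists a d, (a <= v)%MS /\ in_derived br d /\ x = a + d) /\
  (forall a : 'rV[R]_6, (a <= v)%MS -> in_derived br a -> a = 0) /\
  (forall x y : 'rV[R]_6, (x <= v)%MS -> (y <= v)%MS -> bform B x y = 0) /\
  (forall x y : 'rV[R]_6, in_derived br x -> in_derived br y -> bform B x y = 0) /\
  (forall x : 'rV[R]_6, (x <= v)%MS ->
     (forall z, in_derived br z -> bform B x z = 0) -> x = 0) /\
  (forall z : 'rV[R]_6, in_derived br z ->
     (forall x, (x <= v)%MS -> bform B x z = 0) -> z = 0).

Section ButterflyBasis.
Variables (R : realType) (B : 'M[R]_6) (br : V6 R -> V6 R -> V6 R).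
Hypotheses (symB : B^T = B) (lieB : is_lie_bracket br) (invB : invariant_form br B)
  (nilB : two_step_nilpotent br).
Variables a b c : V6 R.
Hypothesis abc_neq0 : bform B (br a b) c != 0.

Let lam := bform B (br a b) c.
Let E := brackets3 br a b c.
Let F := isotropic_lift B (rows3 a b c) E lam.

Let gramEE : gram B E E = 0. Proof. exact: gram_brackets3. Qed.
Let gramFE : gram B F E = lam%:M.
Proof.
by apply: gram_isotropic_lift_l; [exact: gram_rows3_brackets3 | exact: gramEE].
Qed.
Let gramFF : gram B F F = 0.
Proof.
by apply: gram_isotropic_lift;
  [|exact: abc_neq0 | exact: gram_rows3_brackets3 | exact: gramEE].
Qed.

Lemma butterfly_unitmx : B \in unitmx.
Proof. exact: (hyperbolic_form_unitmx (n := 3) symB abc_neq0 gramFF gramEE gramFE). Qed.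

Lemma butterfly_signature : signature B 3 3.
Proof.
split=> //; exists (hyperbolic_frame F E lam); split.
  exact: (unitmx_hyperbolic_frame (n := 3) symB abc_neq0 gramFF gramEE gramFE).
apply: etrans (sign_block_mx R 3).
exact: (gram_hyperbolic_frame (n := 3) symB abc_neq0 gramFF gramEE gramFE).
Qed.

Let gramEF : gram B E F = lam%:M.
Proof. by rewrite -tr_gram // gramFE tr_scalar_mx. Qed.

Let span (x : 'rV[R]_6) : exists al be : 'rV[R]_3, x = al *m F + be *m E.
Proof. exact: (hyperbolic_span (n := 3) symB abc_neq0 gramFF gramEE gramFE). Qed.

Let in_lift (x : 'rV[R]_6) : (x <= <<F>>%MS)%MS -> exists al, x = al *m F.
Proof. by rewrite genmxE => /submxP. Qed.

Let scale_lam_eq0 (al : 'rV[R]_3) : al *m lam%:M = 0 -> al = 0.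
Proof.
by rewrite mul_mx_scalar => /eqP; rewrite scalemx_eq0 (negbTE abc_neq0) => /eqP.
Qed.

Let orthogonal_derived (x : 'rV[R]_6) :
  (forall z, in_derived br z -> bform B x z = 0) -> gram B x E = 0.
Proof.
move=> xz; apply/matrixP => i j; rewrite gram_entry row_id rowE mxE.
exact/xz/in_derived_brackets3.
Qed.

Let derived_orthogonal z : in_derived br z -> gram B z E = 0.
Proof. by move=> dz; apply/orthogonal_derived => z'; apply: derived_isotropic. Qed.

Lemma in_derived_brackets z : in_derived br z -> exists be, z = be *m E.
Proof.
move=> dz; have [al [be zE]] := span z; exists be.
suff al0 : al = 0 by rewrite zE al0 mul0mx add0r.
apply: scale_lam_eq0; have := derived_orthogonal dz.
by rewrite zE gramDl !gramMl gramFE gramEE mulmx0 addr0.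
Qed.

Lemma isotropic_dual_complement_lift : isotropic_dual_complement br B <<F>>%MS.
Proof.
split.
  move=> x; have [al [be ->]] := span x; exists (al *m F), (be *m E).
  by rewrite genmxE submxMl; split=> //; split=> //; apply: in_derived_brackets3.
split.
  move=> _ /in_lift[al ->] /derived_orthogonal.
  by rewrite gramMl gramFE => /scale_lam_eq0 ->; rewrite mul0mx.
split.
  move=> _ _ /in_lift[al ->] /in_lift[al' ->].
  by rewrite -[bform _ _ _]/(gram B _ _ 0 0) gramMl gramMr gramFF mul0mx mulmx0 mxE.
split; first exact: derived_isotropic.
split.
  move=> _ /in_lift[al ->] /orthogonal_derived.
  by rewrite gramMl gramFE => /scale_lam_eq0 ->; rewrite mul0mx.
move=> _ /in_derived_brackets[be ->] orth.
have : gram B (be *m E) F = 0.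
  apply/matrixP => i j; rewrite gram_entry row_id mxE bformC //.
  by apply: orth; rewrite genmxE row_sub.
by rewrite gramMl gramEF => /scale_lam_eq0 ->; rewrite mul0mx.
Qed.

End ButterflyBasis.

Theorem proposition5p3 (R : realType) (br : 'rV[R]_6 -> 'rV[R]_6 -> 'rV[R]_6)
    (B : 'M[R]_6) :
  butterfly br B ->
  (exists v : 'M[R]_6,
     (forall x : 'rV[R]_6, exists a d, (a <= v)%MS /\ in_derived br d /\ x = a + d) /\
     (forall a : 'rV[R]_6, (a <= v)%MS -> in_derived br a -> a = 0) /\
     (forall x y : 'rV[R]_6, (x <= v)%MS -> (y <= v)%MS -> bform B x y = 0) /\
     (forall x y : 'rV[R]_6, in_derived br x -> in_derived br y -> bform B x y = 0) /\
     (forall x : 'rV[R]_6, (x <= v)%MS ->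
        (forall z, in_derived br z -> bform B x z = 0) -> x = 0) /\
     (forall z : 'rV[R]_6, in_derived br z ->
        (forall x, (x <= v)%MS -> bform B x z = 0) -> z = 0)) /\
  (forall x : 'rV[R]_6, in_radical B x -> x = 0) /\
  signature B 3 3.
Proof.
move=> [lieB nilB symB invB /nonisotropic_triple[a [b [c abc_neq0]]]].
split.
  by eexists; exact: (isotropic_dual_complement_lift symB lieB invB nilB abc_neq0).
split; last exact: (butterfly_signature symB lieB invB nilB abc_neq0).
move=> x; apply: in_radical_unitmx.
exact: (butterfly_unitmx symB lieB invB nilB abc_neq0).
Qed.
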